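(* The dense $\mathbb{Q}$-game strategy described below is a pairing strategy (i.e. the pairs of edges it uses are pairwise disjoint) and it is a winning strategy for Breaker in the dense rational number game. The dense $\mathbb{Q}$-game strategy: At the start Breaker fixes an infinite sequence $(I_j)_{j\in\mathbb{N}}$ of pairwise disjoint nonempty open intervals of $\mathbb{Q}$, an enumeration $\mathcal{Q}$ of $\mathbb{Q}$, and an enumeration $(\{p_j,q_j\})_{j\in\mathbb{N}}$ of all $2$-element subsets of $\mathbb{Q}$. For every $j$ and every $s\in I_j\setminus\{p_j,q_j\}$ that appears later in $\mathcal{Q}$ than both $p_j$ and $q_j$, Breaker pairs the edges $p_js$ and $q_js$. Whenever Maker claims one edge of such a pair, Breaker claims the other edge of that pair in his next turn (otherwise Breaker plays arbitrarily).
   Context: Let $K^{\mathbb{Q}}$ denote the complete graph with vertex set $\mathbb{Q}$. In the dense rational number game, Maker and Breaker alternately claim previously unclaimed edges of $K^{\mathbb{Q}}$, one per turn, Maker first, for countably many turns. Maker wins if at the end the graph of Maker's edges contains a complete graph on a countably infinite vertex set $V\subseteq\mathbb{Q}$ that is dense in $\mathbb{Q}$; otherwise Breaker wins. A winning strategy for Breaker is one guaranteeing Breaker wins against every play of Maker. *)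

From mathcomp Require Import all_boot all_order all_algebra.
Import Order.TTheory GRing.Theory Num.Theory.
Local Open Scope ring_scope.

(* An edge of K^Q is an unordered pair {x,y}, x <> y, represented in
   normal form (x, y) with x < y. *)
Definition edge := (rat * rat)%type.
Definition is_edge (e : edge) : Prop := e.1 < e.2.
Definition sedge (x y : rat) : edge := (Num.min x y, Num.max x y).

Definition disjoint_intervals (a b : nat -> rat) : Prop :=
  (forall j, a j < b j) /\
  (forall j j' (x : rat), j <> j' -> x \in (`]a j, b j[) -> x \notin (`]a j', b j'[)).

Definition enum_Q (f : nat -> rat) : Prop := bijective f.

Definition enum_pairs (pq : nat -> edge) : Prop :=
  (forall j, is_edge (pq j)) /\ injective pq /\
  (forall e, is_edge e -> exists j, pq j = e).

Definition pair_index (a b : nat -> rat) (f : nat -> rat) (pq : nat -> edge)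
  (j : nat) (s : rat) : Prop :=
  (s \in (`]a j, b j[)) /\ s <> (pq j).1 /\ s <> (pq j).2 /\
  exists k kp kq, f k = s /\ f kp = (pq j).1 /\ f kq = (pq j).2 /\
                  (kp < k)%N /\ (kq < k)%N.

Definition pair_fst (pq : nat -> edge) (j : nat) (s : rat) : edge := sedge (pq j).1 s.
Definition pair_snd (pq : nat -> edge) (j : nat) (s : rat) : edge := sedge (pq j).2 s.

Definition in_pair (pq : nat -> edge) (j : nat) (s : rat) (e : edge) : Prop :=
  e = pair_fst pq j s \/ e = pair_snd pq j s.

Definition pairing_strategy (a b f : nat -> rat) (pq : nat -> edge) : Prop :=
  (forall j s, pair_index a b f pq j s -> pair_fst pq j s <> pair_snd pq j s) /\
  (forall j s j' s' e, pair_index a b f pq j s -> pair_index a b f pq j' s' ->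
     in_pair pq j s e -> in_pair pq j' s' e -> j = j' /\ s = s').

(* A play: m n is Maker's n-th move, bk n is Breaker's n-th move, in the
   order m 0, bk 0, m 1, bk 1, ...  Legality: every move is an edge and
   no edge is claimed twice. *)
Definition legal_play (m bk : nat -> edge) : Prop :=
  (forall n, is_edge (m n)) /\ (forall n, is_edge (bk n)) /\
  injective m /\ injective bk /\ (forall i k, m i <> bk k).

Definition claimed_before_breaker (m bk : nat -> edge) (n : nat) (e : edge) : Prop :=
  (exists k, (k <= n)%N /\ m k = e) \/ (exists k, (k < n)%N /\ bk k = e).

Definition breaker_follows (a b f : nat -> rat) (pq : nat -> edge)
  (m bk : nat -> edge) : Prop :=
  forall n j s, pair_index a b f pq j s ->
    (m n = pair_fst pq j s ->
       ~ claimed_before_breaker m bk n (pair_snd pq j s) -> bk n = pair_snd pq j s) /\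
    (m n = pair_snd pq j s ->
       ~ claimed_before_breaker m bk n (pair_fst pq j s) -> bk n = pair_fst pq j s).

Definition maker_adj (m : nat -> edge) (x y : rat) : Prop := exists n, m n = sedge x y.

Definition dense_in_Q (V : rat -> Prop) : Prop :=
  forall x y : rat, x < y -> exists v, V v /\ x < v < y.

Definition infinite_set (V : rat -> Prop) : Prop :=
  ~ exists s : seq rat, forall x, V x -> x \in s.

Definition maker_wins (m : nat -> edge) : Prop :=
  exists V : rat -> Prop, infinite_set V /\ dense_in_Q V /\
    forall x y, V x -> V y -> x <> y -> maker_adj m x y.

From mathcomp Require Import all_boot all_order all_algebra.
Import Order.TTheory GRing.Theory Num.Theory.

Local Open Scope ring_scope.

(* Two pairs of the strategy can only share an edge s p_j = s' p_j' with s = s'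
   (then s lies in I_j and I_j', so j = j') or with s = p_j' and s' = p_j; the
   latter is impossible, since each of s, s' would have to appear later than
   the other in the enumeration.

   Against a dense set V, choose p < q in V and the index j of {p, q}.  Since
   V is dense in I_j and only finitely many rationals precede p and q in the
   enumeration, some s in V lies in I_j and appears after p and q, so
   (j, s) indexes a pair.  A Maker clique on V contains both edges ps and qs,
   but Breaker answers the first of them with the second. *)

Lemma sedge_eq (x y u v : rat) :
  sedge x y = sedge u v -> (x = u /\ y = v) \/ (x = v /\ y = u).
Proof.
rewrite /sedge; case: (leP x y); case: (leP u v) => huv hxy [e1 e2]; subst.
all: try by left.
all: try by right.
all: have e : u = v by apply/eqP; rewrite eq_le ?e1 ?e2 ?huv ?hxy ?ltW.
all: by left; rewrite e.
Qed.

Section SubintervalAvoid.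

Local Open Scope order_scope.

Lemma subinterval_avoid_prefix {d} {T : orderType d} (f : nat -> T) (N : nat)
    {x y : T} :
  x < y -> exists x' y', [/\ x <= x', x' < y', y' <= y &
    forall i, (i < N)%N -> ~~ (x' < f i < y')].
Proof.
move=> lt_xy; elim: N => [|N [x' [y' [le_xx' lt_x'y' le_y'y avoid]]]].
  by exists x, y.
have [/andP[lt_x'f lt_fy']|out] := boolP (x' < f N < y').
  exists x', (f N); split=> //; first exact: le_trans (ltW lt_fy') le_y'y.
  move=> i; rewrite ltnS leq_eqVlt => /orP[/eqP ->|lt_iN]; first by rewrite ltxx andbF.
  apply: contraNN (avoid i lt_iN) => /andP[-> lt_fi] /=; exact: lt_trans lt_fi lt_fy'.
exists x', y'; split=> // i; rewrite ltnS leq_eqVlt => /orP[/eqP -> //|].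
exact: avoid.
Qed.

End SubintervalAvoid.

Lemma dense_avoid_prefix {V : rat -> Prop} (f : nat -> rat) (N : nat) {x y : rat} :
  dense_in_Q V -> x < y ->
  exists s, [/\ V s, x < s < y & forall i, (i < N)%N -> f i <> s].
Proof.
move=> denseV lt_xy.
have [x' [y' [le_xx' lt_x'y' le_y'y avoid]]] := subinterval_avoid_prefix f N lt_xy.
have [s [Vs /andP[lt_x's lt_sy']]] := denseV x' y' lt_x'y'.
exists s; split=> //.
  by rewrite (le_lt_trans le_xx' lt_x's) (lt_le_trans lt_sy' le_y'y).
by move=> i lt_iN fi_s; move: (avoid i lt_iN); rewrite fi_s lt_x's lt_sy'.
Qed.

Lemma dense_two_points {V : rat -> Prop} :
  dense_in_Q V -> exists p q, [/\ V p, V q & p < q].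
Proof.
move=> denseV; have [p [Vp _]] := denseV 0 1 ltr01.
have [q [Vq /andP[lt_pq _]]] := denseV p (p + 1) (ltr_pwDr ltr01 (lexx p)).
by exists p, q.
Qed.

Section PairIndex.

Variables (a b f : nat -> rat) (pq : nat -> edge).

Lemma pair_index_late {g : rat -> nat} {j : nat} {s : rat} :
  cancel g f -> s \in `]a j, b j[ ->
  (forall i, (i <= maxn (g (pq j).1) (g (pq j).2))%N -> f i <> s) ->
  pair_index a b f pq j s.
Proof.
move=> gK sI late.
have late_s : (maxn (g (pq j).1) (g (pq j).2) < g s)%N.
  by rewrite ltnNge; apply/negP => le_s; exact: late (g s) le_s (gK s).
have neq_s x : (g x <= maxn (g (pq j).1) (g (pq j).2))%N -> s <> x.
  by move=> le_x e; apply: (late (g x) le_x); rewrite gK e.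
split=> //; split; first exact/neq_s/leq_maxl.
split; first exact/neq_s/leq_maxr.
exists (g s), (g (pq j).1), (g (pq j).2); rewrite !gK.
by split=> //; split=> //; split=> //; split;
  apply: leq_ltn_trans late_s; rewrite ?leq_maxl ?leq_maxr.
Qed.

Lemma pair_index_endpoint_lt {g : rat -> nat} {j : nat} {s x : rat} :
  cancel f g -> pair_index a b f pq j s -> x = (pq j).1 \/ x = (pq j).2 ->
  (g x < g s)%N.
Proof.
move=> fK [_ [_ [_ [k [kp [kq [fk [fkp [fkq [lt_kp lt_kq]]]]]]]]]].
by case=> ->; rewrite -?fkp -?fkq -fk !fK.
Qed.

Lemma pair_fst_neq_snd {j : nat} {s : rat} :
  is_edge (pq j) -> pair_index a b f pq j s -> pair_fst pq j s <> pair_snd pq j s.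
Proof.
move=> pq_edge [_ [neq_p _]] /sedge_eq [[e _]|[e _]].
  by move: pq_edge; rewrite /is_edge e ltxx.
exact: neq_p (esym e).
Qed.

Lemma in_pair_sedge {j : nat} {s : rat} {e : edge} :
  in_pair pq j s e -> exists2 x, x = (pq j).1 \/ x = (pq j).2 & e = sedge x s.
Proof. by case=> ->; [exists (pq j).1; first left | exists (pq j).2; first right]. Qed.

Lemma pair_index_disjoint {g : rat -> nat} {j j' : nat} {s s' x x' : rat} :
  disjoint_intervals a b -> cancel f g ->
  pair_index a b f pq j s -> pair_index a b f pq j' s' ->
  x = (pq j).1 \/ x = (pq j).2 -> x' = (pq j').1 \/ x' = (pq j').2 ->
  sedge x s = sedge x' s' -> j = j' /\ s = s'.
Proof.
move=> [_ disj] fK ij ij' xj x'j' /sedge_eq [[_ e]|[e e']].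
  have [//|neq] := eqVneq j j'; have [sI _] := ij; have [s'I _] := ij'.
  by move: (disj j j' s (elimN eqP neq) sI); rewrite e s'I.
have := pair_index_endpoint_lt fK ij xj; rewrite e.
have := pair_index_endpoint_lt fK ij' x'j'; rewrite -e'.
by move=> /ltn_trans lt1 /lt1; rewrite ltnn.
Qed.

Lemma dense_pairing_strategy :
  disjoint_intervals a b -> enum_Q f -> (forall j, is_edge (pq j)) ->
  pairing_strategy a b f pq.
Proof.
move=> disjI [g fK _] pq_edge; split=> [j s|j s j' s' e ij ij' /in_pair_sedge].
  exact: pair_fst_neq_snd (pq_edge j).
move=> [x xj ->] /in_pair_sedge [x' x'j' e_eq].
exact: pair_index_disjoint disjI fK ij ij' xj x'j' e_eq.
Qed.

End PairIndex.

Lemma maker_claim_later_unclaimed {m bk : nat -> edge} {n1 n2 : nat} :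
  legal_play m bk -> (n1 < n2)%N -> ~ claimed_before_breaker m bk n1 (m n2).
Proof.
move=> [_ [_ [minj [_ mbk]]]] lt12 [[k [le_k /minj ek]]|[k [_ ek]]].
  by move: le_k; rewrite ek leqNgt lt12.
exact: mbk n2 k (esym ek).
Qed.

Lemma maker_not_both_answered {m bk : nat -> edge} {e1 e2 : edge} {n1 n2 : nat} :
  legal_play m bk -> e1 <> e2 ->
  (forall n, m n = e1 -> ~ claimed_before_breaker m bk n e2 -> bk n = e2) ->
  (forall n, m n = e2 -> ~ claimed_before_breaker m bk n e1 -> bk n = e1) ->
  m n1 = e1 -> m n2 = e2 -> False.
Proof.
move=> play; wlog lt12 : e1 e2 n1 n2 / (n1 < n2)%N => [sym|].
  move=> neq ans1 ans2 e_n1 e_n2; case: (ltngtP n1 n2) => [lt12|lt21|eq12].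
  - exact: sym lt12 neq ans1 ans2 e_n1 e_n2.
  - by apply: sym lt21 _ ans2 ans1 e_n2 e_n1 => e; exact: neq (esym e).
  - by apply: neq; rewrite -e_n1 -e_n2 eq12.
move=> _ ans1 _ e_n1 e_n2; have [_ [_ [_ [_ mbk]]]] := play.
have unclaimed := maker_claim_later_unclaimed play lt12; rewrite e_n2 in unclaimed.
by apply: (mbk n2 n1); rewrite (ans1 n1 e_n1 unclaimed).
Qed.

Theorem lemma4p1 (a b f : nat -> rat) (pq : nat -> edge) :
  disjoint_intervals a b -> enum_Q f -> enum_pairs pq ->
  pairing_strategy a b f pq /\
  (forall m bk : nat -> edge, legal_play m bk -> breaker_follows a b f pq m bk ->
     ~ maker_wins m).
Proof.
move=> disjI enumf [pq_edge [_ pq_onto]].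
split; first exact: dense_pairing_strategy.
have [g _ gK] := enumf.
move=> m bk play follows [V [_ [denseV clique]]].
have [p [q [Vp Vq lt_pq]]] := dense_two_points denseV.
have [j pq_j] := pq_onto (p, q) lt_pq.
have [ab _] := disjI.
have [s [Vs sI late]] := dense_avoid_prefix f (maxn (g p) (g q)).+1 denseV (ab j).
have ij : pair_index a b f pq j s.
  by apply: (pair_index_late _ _ _ _ gK); rewrite ?in_itv //= pq_j.
have [_ [neq_p [neq_q _]]] := ij; rewrite pq_j /= in neq_p neq_q.
have [n1 m_n1] := clique p s Vp Vs (fun e => neq_p (esym e)).
have [n2 m_n2] := clique q s Vq Vs (fun e => neq_q (esym e)).
have fst_n1 : m n1 = pair_fst pq j s by rewrite /pair_fst pq_j.
have snd_n2 : m n2 = pair_snd pq j s by rewrite /pair_snd pq_j.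
exact: (maker_not_both_answered play (pair_fst_neq_snd _ _ _ _ (pq_edge j) ij)
  (fun n => (follows n j s ij).1) (fun n => (follows n j s ij).2) fst_n1 snd_n2).
Qed.
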